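(* Let $E=\frac{\sqrt{15}}{4}\begin{pmatrix}1&0\\0&0\end{pmatrix}$ and $B=\frac18\begin{pmatrix}1&1\\1&1\end{pmatrix}$, with Bloch representations $e^0=\sqrt{15}/4$, $\vec e=(0,0,\sqrt{15}/4)$, $b^0=1/4$, $\vec b=\tfrac14(1,0,0)$. Then $\|\vec e\|^2+\|\vec b\|^2-(\vec e\cdot\vec b)^2=1$, yet the two-outcome POVMs $(E,\mathbb 1-E)$ and $(B,\mathbb 1-B)$ are not jointly measurable.
   Context: A qubit effect $E$ is written $E=\tfrac12(e^0\mathbb 1+\vec e\cdot\vec\sigma)$ with $\vec\sigma$ the vector of Pauli matrices. Two POVMs $(E_i)$, $(B_j)$ are jointly measurable if there is a POVM $(N_{ij})$ with $\sum_jN_{ij}=E_i$, $\sum_iN_{ij}=B_j$. *)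

(* Scalars: C = R[i] for an arbitrary real closed field R
   (R = the reals is the intended instance). *)
From HB Require Import structures.
From mathcomp Require Import all_boot all_order all_algebra.
From mathcomp Require Import complex.
Set Implicit Arguments. Unset Strict Implicit. Unset Printing Implicit Defensive.
Import Order.TTheory GRing.Theory Num.Theory.
Local Open Scope complex_scope.
Local Open Scope ring_scope.

Section Qubit.
Variable R : rcfType.
Local Notation C := (R[i]).

(* positive semidefinite 2x2 complex matrix: <v, A v> >= 0 for all v
   (the order on C: 0 <= z iff z is real and nonnegative) *)
Definition psd (A : 'M[C]_2) : Prop :=
  forall v : 'cV[C]_2, 0 <= \sum_(i < 2) \sum_(j < 2) (v i 0)^* * A i j * v j 0.

Definition effect (E : 'M[C]_2) : Prop := psd E /\ psd (1%:M - E).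

Definition povm2 (E : 'M[C]_2) : 'I_2 -> 'M[C]_2 :=
  fun i => if i == ord0 then E else 1%:M - E.

Definition jointly_measurable m n (Ep : 'I_m -> 'M[C]_2) (Bp : 'I_n -> 'M[C]_2)
  : Prop :=
  exists N : 'I_m -> 'I_n -> 'M[C]_2,
    (forall i j, psd (N i j)) /\
    (forall i, \sum_(j < n) N i j = Ep i) /\
    (forall j, \sum_(i < m) N i j = Bp j).

Definition pauli (k : 'I_3) : 'M[C]_2 :=
  if val k == 0%N then \matrix_(i < 2, j < 2) (if i == j then 0 else 1)
  else if val k == 1%N then
    \matrix_(i < 2, j < 2)
      (if i == j then 0 else if val i == 0%N then - 'i else 'i)
  else \matrix_(i < 2, j < 2)
      (if i == j then (if val i == 0%N then 1 else -1) else 0).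

Definition bloch (e0 : R) (e : 'rV[R]_3) : 'M[C]_2 :=
  2^-1 *: ((e0%:C) %:M + \sum_(k < 3) (e 0 k)%:C *: pauli k).

Definition dot3 (u v : 'rV[R]_3) : R := \sum_(k < 3) u 0 k * v 0 k.

End Qubit.

Definition Emat (R : rcfType) : 'M[R[i]]_2 :=
  \matrix_(i < 2, j < 2)
    (if (val i == 0%N) && (val j == 0%N) then (Num.sqrt (15 : R) / 4)%:C else 0).
Definition Bmat (R : rcfType) : 'M[R[i]]_2 :=
  \matrix_(i < 2, j < 2) ((1 / 8 : R)%:C).
Definition evec (R : rcfType) : 'rV[R]_3 := \row_(k < 3) (if val k == 2%N then Num.sqrt 15 / 4 else 0).
Definition bvec (R : rcfType) : 'rV[R]_3 := \row_(k < 3) (if val k == 0%N then 1 / 4 else 0).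

(* Suppose N jointly measures (E, 1 - E) and (B, 1 - B), and let M := N 0 0,
   so that 0 <= M <= E and 0 <= M <= B.  Since E vanishes on e1 and B on
   e0 - e1, so does the quadratic form of M, and positivity of M at e0 - 2 e1
   then forces <e0, M e0> = 0.  But the joint element for the outcomes
   (1 - E, 1 - B) is 1 - E - B + M, whose (0,0) entry 7/8 - sqrt 15 / 4 is
   negative. *)

From HB Require Import structures.
From mathcomp Require Import all_boot all_order all_algebra.
From mathcomp Require Import complex ring lra.
Set Implicit Arguments. Unset Strict Implicit. Unset Printing Implicit Defensive.
Import Order.TTheory GRing.Theory Num.Theory.
Local Open Scope complex_scope.
Local Open Scope ring_scope.

Lemma sum_ord2 (V : nmodType) (F : 'I_2 -> V) : \sum_(i < 2) F i = F 0 + F 1.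
Proof. by rewrite big_ord_recl big_ord1; congr (F _ + F _); apply: val_inj. Qed.

Lemma sum_ord3 (V : nmodType) (F : 'I_3 -> V) : \sum_(i < 3) F i = F 0 + F 1 + F 2.
Proof.
by rewrite big_ord_recl big_ord_recl big_ord1 addrA; congr (F _ + F _ + F _); apply: val_inj.
Qed.

Section Qubit.
Variable R : rcfType.
Local Notation C := R[i].

Lemma blochE (e0 : R) (e : 'rV[R]_3) : bloch e0 e =
  \matrix_(i < 2, j < 2)
    (if i == j then ((e0 + (-1) ^+ i * e 0 2) / 2)%:C
     else (e 0 0 / 2) +i* ((-1) ^+ j * e 0 1 / 2)).
Proof.
apply/matrixP => i j; rewrite /bloch /pauli !mxE sum_ord3 !mxE /=.
case: i => [[|[|?]] ?] //; case: j => [[|[|?]] ?] //=; simpc.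
all: by apply/eqP; rewrite eq_complex /=; apply/andP; split; apply/eqP; field.
Qed.

Lemma dot3E (u v : 'rV[R]_3) : dot3 u v = u 0 0 * v 0 0 + u 0 1 * v 0 1 + u 0 2 * v 0 2.
Proof. by rewrite /dot3 sum_ord3. Qed.

Definition qform (A : 'M[C]_2) (v : 'cV[C]_2) : C :=
  \sum_(i < 2) \sum_(j < 2) (v i 0)^* * A i j * v j 0.

Lemma psdE A : psd A = forall v, 0 <= qform A v.
Proof. by []. Qed.

Lemma qform2E A v : qform A v =
  (v 0 0)^* * A 0 0 * v 0 0 + (v 0 0)^* * A 0 1 * v 1 0 +
  (v 1 0)^* * A 1 0 * v 0 0 + (v 1 0)^* * A 1 1 * v 1 0.
Proof. by rewrite /qform !sum_ord2 !addrA. Qed.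

Lemma qformB A B v : qform (A - B) v = qform A v - qform B v.
Proof.
rewrite /qform -sumrB; apply: eq_bigr => i _; rewrite -sumrB.
by apply: eq_bigr => j _; rewrite !mxE mulrBr mulrBl.
Qed.

Definition vec2 (x y : R) : 'cV[C]_2 := \col_(i < 2) (if i == 0 then x else y)%:C.

Lemma qform_vec2 A x y : qform A (vec2 x y) =
  (x ^+ 2)%:C * A 0 0 + (x * y)%:C * (A 0 1 + A 1 0) + (y ^+ 2)%:C * A 1 1.
Proof.
have conj_real (t : R) : (t%:C)^* = t%:C.
  by apply/eqP; rewrite eq_complex /= oppr0 !eqxx.
by rewrite qform2E !mxE /= !conj_real rmorphXn rmorphM rmorphXn /=; ring.
Qed.

Lemma qform_e0 A : qform A (vec2 1 0) = A 0 0.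
Proof.
by rewrite qform_vec2 expr1n mulr0 expr0n /= mulr0n rmorph0 rmorph1 !mul0r mul1r !addr0.
Qed.

Lemma psd_real_sym2 (A : 'M[C]_2) (p q r : R) :
  A 0 0 = p%:C -> A 0 1 = q%:C -> A 1 0 = q%:C -> A 1 1 = r%:C ->
  0 <= p -> 0 <= r -> q ^+ 2 <= p * r -> psd A.
Proof.
move=> A00 A01 A10 A11 p_ge0 r_ge0 det_ge0; rewrite psdE => v.
rewrite qform2E A00 A01 A10 A11.
case: (v 0 0) => a b; case: (v 1 0) => c d; rewrite lecE; simpc => /=.
apply/andP; split; first by apply/eqP; ring.
have [p0|p_gt0] : p = 0 \/ 0 < p by move: p_ge0; rewrite le_eqVlt => /orP[/eqP|]; auto.
  have q0 : q = 0.
    move: det_ge0; rewrite p0 mul0r => q2_le0.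
    by apply/eqP; rewrite -sqrf_eq0 eq_le q2_le0 sqr_ge0.
  rewrite p0 q0; nra.
(* p <v, A v> = |p a + q c|^2 + |p b + q d|^2 + (p r - q^2) |v 1 0|^2 *)
rewrite -(pmulr_rge0 _ p_gt0).
have := sqr_ge0 (p * a + q * c); have := sqr_ge0 (p * b + q * d).
have : 0 <= (p * r - q ^+ 2) * (c ^+ 2 + d ^+ 2) by apply: mulr_ge0; nra.
nra.
Qed.

Lemma psd_qform_eq0 (N A : 'M[C]_2) v :
  psd N -> psd (A - N) -> qform A v = 0 -> qform N v = 0.
Proof.
rewrite !psdE => N_psd AN_psd Av0; apply/le_anti; rewrite N_psd andbT -oppr_ge0.
by have := AN_psd v; rewrite qformB Av0 sub0r.
Qed.

Lemma psd_qform_e0_eq0 (A : 'M[C]_2) :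
  psd A -> qform A (vec2 0 1) = 0 -> qform A (vec2 1 (-1)) = 0 ->
  qform A (vec2 1 0) = 0.
Proof.
rewrite psdE => A_psd A01 A1N1.
have polar : qform A (vec2 1 (-2)) =
    2 * qform A (vec2 1 (-1)) - qform A (vec2 1 0) + 2 * qform A (vec2 0 1).
  rewrite !qform_vec2 !rmorphXn !rmorphM !rmorphN rmorph_nat !rmorph1 rmorph0; ring.
apply/le_anti; rewrite A_psd andbT -oppr_ge0.
by have := A_psd (vec2 1 (-2)); rewrite polar A01 A1N1 !mulr0 sub0r addr0.
Qed.

Lemma Emat_bloch : Emat R = bloch (Num.sqrt 15 / 4) (evec R).
Proof.
rewrite blochE; apply/matrixP => i j; rewrite !mxE.
case: i => [[|[|?]] ?] //; case: j => [[|[|?]] ?] //=; simpc.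
all: by apply/eqP; rewrite eq_complex /=; apply/andP; split; apply/eqP; field.
Qed.

Lemma Bmat_bloch : Bmat R = bloch (1 / 4) (bvec R).
Proof.
rewrite blochE; apply/matrixP => i j; rewrite !mxE.
case: i => [[|[|?]] ?] //; case: j => [[|[|?]] ?] //=; simpc.
all: by apply/eqP; rewrite eq_complex /=; apply/andP; split; apply/eqP; field.
Qed.

Lemma Bloch_norm_identity :
  dot3 (evec R) (evec R) + dot3 (bvec R) (bvec R) - (dot3 (evec R) (bvec R)) ^+ 2 = 1.
Proof.
have s2 : Num.sqrt (15 : R) ^+ 2 = 15 by rewrite sqr_sqrtr // ler0n.
rewrite !dot3E !mxE /=; nra.
Qed.
Lemma sqrt15_bounds : 7 / 2 < Num.sqrt (15 : R) < 4.
Proof.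
have s_ge0 : 0 <= Num.sqrt (15 : R) by exact: sqrtr_ge0.
have s2 : Num.sqrt (15 : R) ^+ 2 = 15 by rewrite sqr_sqrtr // ler0n.
apply/andP; split; nra.
Qed.

Lemma Emat_effect : effect (Emat R).
Proof.
have /andP[_ s_lt4] := sqrt15_bounds; have s_ge0 := sqrtr_ge0 (15 : R).
split.
  apply: (@psd_real_sym2 _ (Num.sqrt 15 / 4) 0 0); rewrite ?mxE //=; lra.
apply: (@psd_real_sym2 _ (1 - Num.sqrt 15 / 4) 0 1);
  rewrite ?mxE /= ?(rmorphB, rmorph0, rmorph1, subr0) //; nra.
Qed.

Lemma Bmat_effect : effect (Bmat R).
Proof.
split.
  apply: (@psd_real_sym2 _ (1 / 8) (1 / 8) (1 / 8)); rewrite ?mxE //=; lra.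
apply: (@psd_real_sym2 _ (1 - 1 / 8) (- (1 / 8)) (1 - 1 / 8));
  rewrite ?mxE /= ?(rmorphB, rmorphN, rmorph1, sub0r) //; lra.
Qed.

Lemma Emat_qform_e1 : qform (Emat R) (vec2 0 1) = 0.
Proof.
by rewrite qform_vec2 !mxE /= expr0n /= mulr0n !(mulr0, addr0) -[(0 : R)%:C]/(0 : C) mul0r.
Qed.

Lemma Bmat_qform_e0_sub_e1 : qform (Bmat R) (vec2 1 (-1)) = 0.
Proof.
rewrite qform_vec2 !mxE /=; apply/eqP; rewrite eq_complex; simpc => /=.
by rewrite andbT sqrrN expr1n; apply/eqP; lra.
Qed.

Lemma Emat_Bmat_not_jointly_measurable :
  ~ jointly_measurable (povm2 (Emat R)) (povm2 (Bmat R)).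
Proof.
case=> N [N_psd [N_row N_col]].
have N01E : N 0 1 = Emat R - N 0 0.
  by have := N_row 0; rewrite sum_ord2 /povm2 /= => <-; rewrite [RHS]addrC addKr.
have N10E : N 1 0 = Bmat R - N 0 0.
  by have := N_col 0; rewrite sum_ord2 /povm2 /= => <-; rewrite [RHS]addrC addKr.
have N11E : N 1 1 = 1%:M - Bmat R - N 0 1.
  by have := N_col 1; rewrite sum_ord2 /povm2 /= => <-; rewrite [RHS]addrC addKr.
have N00_e1 : qform (N 0 0) (vec2 0 1) = 0.
  by apply: (psd_qform_eq0 (N_psd 0 0) _ Emat_qform_e1); rewrite -N01E.
have N00_e0_sub_e1 : qform (N 0 0) (vec2 1 (-1)) = 0.
  by apply: (psd_qform_eq0 (N_psd 0 0) _ Bmat_qform_e0_sub_e1); rewrite -N10E.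
have N00_e0 := psd_qform_e0_eq0 (N_psd 0 0) N00_e1 N00_e0_sub_e1.
have := N_psd 1 1; rewrite psdE => /(_ (vec2 1 0)).
rewrite N11E N01E !qformB N00_e0 !qform_e0 !mxE /= subr0 lecE; simpc => /=.
by have := sqrt15_bounds; lra.
Qed.

End Qubit.

Local Close Scope complex_scope.

Theorem mainTheorem4 (R : rcfType) :
  Emat R = bloch (Num.sqrt 15 / 4) (evec R) /\
  Bmat R = bloch (1 / 4) (bvec R) /\
  effect (Emat R) /\ effect (Bmat R) /\
  dot3 (evec R) (evec R) + dot3 (bvec R) (bvec R)
    - (dot3 (evec R) (bvec R)) ^+ 2 = 1 /\
  ~ jointly_measurable (povm2 (Emat R)) (povm2 (Bmat R)).
Proof.
split; first exact: Emat_bloch.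
split; first exact: Bmat_bloch.
split; first exact: Emat_effect.
split; first exact: Bmat_effect.
split; first exact: Bloch_norm_identity.
exact: Emat_Bmat_not_jointly_measurable.
Qed.
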